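(* Let $q\ge 3$ be a prime power, $e\ge 3$, $a\in\mathbb{F}_{q^e}$ with $a\neq 0$, $\ell=q^{e-1}+\cdots+q+1$, and let $r=h(\ell-q^{e-1}-1)+1$ for some integer $1\le h\le q-1$. Let $N=2q^{e-1}-q^{e-2}-1$, for $i\in\mathbb{Z}$ let $A_i=i\ell-\frac{rN}{q-1}$, let $S_N=\{A_i: i\in\mathbb{Z},\ 0\le A_i\le N\}$, and let $j=2hq^{e-3}+h\sum_{i=0}^{e-4}q^i$. Then (i) $A_j=(h-2)q^{e-2}+(2h-1)q^{e-3}+(h-1)\sum_{i=0}^{e-4}q^i$; (ii) $A_{j+1}=q^{e-1}+(h-1)q^{e-2}+2hq^{e-3}+h\sum_{i=0}^{e-4}q^i$; (iii) $S_N=\{A_{j+1}\}$ if $h=1$, $S_N=\{A_j,A_{j+1}\}$ if $2\le h\le q-2$, and $S_N=\{A_j\}$ if $h=q-1$.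
   Context: Empty sums (e.g. $\sum_{i=0}^{e-4}$ when $e=3$) equal $0$. *)

From HB Require Import structures.
From mathcomp Require Import all_boot all_order all_algebra all_field.
Set Implicit Arguments. Unset Strict Implicit. Unset Printing Implicit Defensive.
Import Order.TTheory GRing.Theory Num.Theory.
Local Open Scope ring_scope.

Definition prime_power (q : nat) : Prop :=
  exists p k : nat, prime p /\ (0 < k)%N /\ q = (p ^ k)%N.

Definition geom (q n : nat) : nat := (\sum_(0 <= i < n) q ^ i)%N.

Definition ell (q e : nat) : nat := geom q e.

Definition rr (q e h : nat) : int :=
  (h%:Z) * ((ell q e)%:Z - (q ^ e.-1)%:Z - 1) + 1.

Definition NN (q e : nat) : int :=
  2 * (q ^ e.-1)%:Z - (q ^ (e - 2))%:Z - 1.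

Definition AA (q e h : nat) (i : int) : rat :=
  i%:~R * (ell q e)%:R - (rr q e h)%:~R * (NN q e)%:~R / ((q%:R : rat) - 1).

Definition inSN (q e h : nat) (x : rat) : Prop :=
  exists i : int, x = AA q e h i /\ 0 <= x /\ x <= (NN q e)%:~R.

Definition jj (q e h : nat) : nat := (2 * h * q ^ (e - 3) + h * geom q (e - 3))%N.

From HB Require Import structures.
From mathcomp Require Import all_boot all_order all_algebra all_field.
From mathcomp Require Import ring lra zify.
Import Order.TTheory GRing.Theory Num.Theory.
Set Implicit Arguments. Unset Strict Implicit. Unset Printing Implicit Defensive.
Local Open Scope ring_scope.

(* Put Q = q, P = q^(e-3), G = 1 + q + ... + q^(e-4) and H = h, so that (Q - 1) G = P - 1.
   Then ell = Q^2 P + Q P + P + G, N = 2 Q^2 P - Q P - 1 and A_i = A_j + (i - j) ell: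
   the A_i form an arithmetic progression of step ell through A_j.  Since A_j - ell < 0 and
   N < A_j + 2 ell, only A_j and A_(j+1) = A_j + ell can lie in [0, N]; moreover A_j >= 0
   exactly when h >= 2, and A_(j+1) <= N exactly when h <= q - 2. *)

Lemma geomS (q n : nat) : geom q n.+1 = (geom q n + q ^ n)%N.
Proof. by rewrite /geom big_nat_recr. Qed.

Lemma geom_telescope (R : pzRingType) (q n : nat) :
  (q%:R - 1) * (geom q n)%:R = q%:R ^+ n - 1 :> R.
Proof.
by rewrite subrX1 /geom big_mkord natr_sum; under eq_bigr do rewrite natrX.
Qed.

Section Expressions.
Variables (R : pzRingType) (Q P G H : R).
Definition ell_of := Q ^+ 2 * P + Q * P + P + G.
Definition N_of := 2 * (Q ^+ 2 * P) - Q * P - 1.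
Definition Aj_of := (H - 2) * (Q * P) + (2 * H - 1) * P + (H - 1) * G.
Definition j_of := 2 * H * P + H * G.
End Expressions.

Lemma A_shift (F : fieldType) (Q P G H i : F) : Q != 1 -> (Q - 1) * G = P - 1 ->
  i * ell_of Q P G - (H * (ell_of Q P G - Q ^+ 2 * P - 1) + 1) * N_of Q P / (Q - 1)
  = Aj_of Q P G H + (i - j_of P G H) * ell_of Q P G.
Proof.
move=> /negPf Q1 QG; have -> : P = (Q - 1) * G + 1 by rewrite QG; ring.
by rewrite /ell_of /N_of /Aj_of /j_of; field; rewrite subr_eq0 Q1.
Qed.

Section Bounds.
Variables (R : realFieldType) (Q P G H : R).
Hypotheses (Q3 : 3 <= Q) (P1 : 1 <= P) (QG : (Q - 1) * G = P - 1).
Hypotheses (H1 : 1 <= H) (HQ : H <= Q - 1).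

Local Notation L := (ell_of Q P G).
Local Notation A := (Aj_of Q P G H).
Local Notation N := (N_of Q P).

Lemma geom_ge0 : 0 <= G.
Proof.
have : 0 <= (Q - 1) * G by rewrite QG subr_ge0.
by rewrite pmulr_rge0 // subr_gt0 (lt_le_trans _ Q3) ?ltr1n.
Qed.

Lemma three_P_le_QP : 3 * P <= Q * P.
Proof. by move: Q3 P1; nra. Qed.

Local Ltac bounds :=
  move: Q3 P1 QG H1 HQ geom_ge0 three_P_le_QP; rewrite /Aj_of /ell_of /N_of; nra.

Lemma ell_gt0 : 0 < L.
Proof. by move: Q3 P1 geom_ge0 three_P_le_QP; rewrite /ell_of; nra. Qed.

Lemma Aj_sub_ell_lt0 : A - L < 0.
Proof. bounds. Qed.

Lemma N_lt_Aj_add_2ell : N < A + L *+ 2.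
Proof. bounds. Qed.

Lemma Aj_le_N : A <= N.
Proof. bounds. Qed.

Lemma Aj_add_ell_ge0 : 0 <= A + L.
Proof. bounds. Qed.

Lemma Aj_ge0 : 2 <= H -> 0 <= A.
Proof. bounds. Qed.

Lemma Aj_lt0 : H = 1 -> A < 0.
Proof. bounds. Qed.

Lemma Aj_add_ell_le_N : H <= Q - 2 -> A + L <= N.
Proof. bounds. Qed.

Lemma N_lt_Aj_add_ell : H = Q - 1 -> N < A + L.
Proof. bounds. Qed.

End Bounds.

Lemma progression_window (R : realDomainType) (x0 L N x : R) :
  0 < L -> x0 - L < 0 -> N < x0 + L *+ 2 -> x0 <= N -> 0 <= x0 + L ->
  (exists k : int, x = x0 + k%:~R * L /\ 0 <= x /\ x <= N) <->
  (x = x0 /\ 0 <= x0) \/ (x = x0 + L /\ x0 + L <= N).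
Proof.
move=> L0 lo hi x0N x1ge0; split.
- case=> k [-> [ge0 leN]].
  have k_gt : 0 < k + 1.
    by rewrite -(ltr0z R) -(pmulr_lgt0 _ L0) intrD mulrDl mul1r; lra.
  have k_lt : 0 < 2 - k.
    by rewrite -(ltr0z R) -(pmulr_lgt0 _ L0) intrB mulrBl mulr2n mulrDl mul1r; lra.
  have [k0|k1] : k = 0 \/ k = 1 by clear -k_gt k_lt; lia.
  + by left; rewrite k0 mul0r addr0 in ge0 *.
  + by right; rewrite k1 mul1r in leN *.
- by case=> [[-> ?]|[-> ?]]; [exists 0 | exists 1]; rewrite ?mul0r ?addr0 ?mul1r.
Qed.

Section Decomposition.
Variables (R : comNzRingType) (q n : nat).
Local Notation Q := (q%:R : R).

Lemma ell_decomp : (ell q n.+3)%:R = ell_of Q (Q ^+ n) (geom q n)%:R.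
Proof. by rewrite /ell !geomS !natrD !natrX /ell_of !exprS; ring. Qed.

Lemma NN_decomp : (NN q n.+3)%:~R = N_of Q (Q ^+ n).
Proof.
by rewrite /NN !subSS subn0 /= !(intrD, intrB, intrM, intrN) -!pmulrn !natrX /N_of !exprS; ring.
Qed.

End Decomposition.

Section Window.
Variables (q n h : nat).
Hypotheses (q3 : (3 <= q)%N) (h1 : (1 <= h)%N) (hq : (h <= q - 1)%N).
Local Notation Q := (q%:R : rat).
Local Notation P := (Q ^+ n).
Local Notation G := ((geom q n)%:R : rat).
Local Notation H := (h%:R : rat).
Local Notation L := (ell_of Q P G).
Local Notation A := (Aj_of Q P G H).
Local Notation N := (N_of Q P).

Lemma AA_shift (i : int) : AA q n.+3 h i = A + (i - (jj q n.+3 h)%:Z)%:~R * L.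
Proof.
have QP : (q ^ n.+3.-1)%:R = Q ^+ 2 * P by rewrite natrX -exprD add2n.
have jP : (jj q n.+3 h)%:R = j_of P G H by rewrite /jj !subSS subn0 natrD !natrM natrX.
rewrite /AA /rr (NN_decomp rat) !(intrD, intrM, intrN) -!pmulrn (ell_decomp rat) QP jP.
by apply: A_shift; [rewrite pnatr_eq1; lia | exact: geom_telescope].
Qed.

Let Q3 : 3 <= Q. Proof. by rewrite (ler_nat _ 3). Qed.
Let P1 : 1 <= P. Proof. by rewrite exprn_ege1 // (ler_nat _ 1); lia. Qed.
Let QG : (Q - 1) * G = P - 1. Proof. exact: geom_telescope. Qed.
Let H1 : 1 <= H. Proof. by rewrite (ler_nat _ 1). Qed.
Let HQ : H <= Q - 1. Proof. by rewrite -[1]/(1%:R) -natrB ?ler_nat //; lia. Qed.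

Lemma inSN_window (x : rat) :
  inSN q n.+3 h x <-> (x = A /\ 0 <= A) \/ (x = A + L /\ A + L <= N).
Proof.
rewrite -progression_window; last first.
- exact: Aj_add_ell_ge0.
- exact: Aj_le_N.
- exact: N_lt_Aj_add_2ell.
- exact: Aj_sub_ell_lt0.
- exact: ell_gt0.
rewrite /inSN (NN_decomp rat); split=> [[i [-> xN]] | [k [-> xN]]].
- by exists (i - (jj q n.+3 h)%:Z); rewrite -AA_shift.
- by exists (k + (jj q n.+3 h)%:Z); rewrite AA_shift addrK.
Qed.

Lemma Aj_ge0_iff : (0 <= A) = (2 <= h)%N.
Proof.
have [h_1 | h_2] : h = 1%N \/ (2 <= h)%N by lia.
- have -> : (2 <= h)%N = false by lia.
  by apply/negbTE; rewrite -ltNge (Aj_lt0 Q3 P1 QG H1 HQ) // h_1.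
- by rewrite h_2 (Aj_ge0 Q3 P1 QG H1 HQ) // (ler_nat _ 2).
Qed.

Lemma Aj_add_ell_le_N_iff : (A + L <= N) = (h <= q - 2)%N.
Proof.
have [h_q | h_q] : h = (q - 1)%N \/ (h <= q - 2)%N by lia.
- have -> : (h <= q - 2)%N = false by lia.
  by apply/negbTE; rewrite -ltNge (N_lt_Aj_add_ell Q3 P1 QG H1 HQ) // h_q natrB //; lia.
- by rewrite h_q (Aj_add_ell_le_N Q3 P1 QG H1 HQ) // -(natrB _ (_ : 2 <= q)%N) ?ler_nat //; lia.
Qed.

End Window.

Theorem lemma4p4 (q e h : nat) (F : finFieldType) (a : F)
  (Hq : prime_power q) (Hq3 : (3 <= q)%N) (He : (3 <= e)%N)
  (HF : #|F| = (q ^ e)%N) (Ha : a != 0)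
  (Hh1 : (1 <= h)%N) (Hh2 : (h <= q - 1)%N) :
  let Aj := (h%:~R - 2) * (q ^ (e - 2))%:R + (2 * h%:~R - 1) * (q ^ (e - 3))%:R
            + (h%:~R - 1) * (geom q (e - 3))%:R : rat in
  let Aj1 := (q ^ e.-1)%:R + (h%:~R - 1) * (q ^ (e - 2))%:R
            + 2 * h%:~R * (q ^ (e - 3))%:R + h%:~R * (geom q (e - 3))%:R : rat in
  [/\ AA q e h (jj q e h)%:Z = Aj,
      AA q e h (jj q e h).+1%:Z = Aj1
    & forall x : rat,
        inSN q e h x <->
        (if h == 1%N then x = Aj1
         else if h == (q - 1)%N then x = Aj
         else x = Aj \/ x = Aj1)].
Proof.
case: e He HF => [|[|[|n]]] // _ _.
rewrite !subSS !subn0 -[n.+3.-1]/n.+2 !natrX !exprS => Aj Aj1.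
have AjE : Aj = Aj_of q%:R (q%:R ^+ n) (geom q n)%:R h%:R by [].
have Aj1E : Aj1 = Aj_of q%:R (q%:R ^+ n) (geom q n)%:R h%:R + ell_of q%:R (q%:R ^+ n) (geom q n)%:R.
  by rewrite /Aj1 /Aj_of /ell_of; ring.
split.
- by rewrite AA_shift // addrN mul0r addr0.
- have jS : (jj q n.+3 h).+1%:Z - (jj q n.+3 h)%:Z = 1 by lia.
  by rewrite AA_shift // jS mul1r.
move=> x; rewrite inSN_window // Aj_ge0_iff // Aj_add_ell_le_N_iff // -Aj1E -AjE.
have [h_1 | [h_q | h_mid]] : h = 1%N \/ h = (q - 1)%N \/ (1 < h <= q - 2)%N by lia.
- have [-> ->] : (1 < h)%N = false /\ (h <= q - 2)%N by lia.
  by rewrite h_1 eqxx; split=> [[[]|[]] | ->] //; right.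
- have [-> ->] : (1 < h)%N /\ (h <= q - 2)%N = false by lia.
  by rewrite h_q ifN_eq ?eqxx; [split=> [[[]|[]] | ->] //; left | lia].
- have /andP[-> ->] := h_mid.
  by rewrite !ifN_eq; [split=> [[[]|[]] | []] ->; auto | lia | lia].
Qed.
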